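(* Let $\mathfrak{R}$ be an alternative ring with a nontrivial idempotent $e_1$ and Peirce decomposition $\mathfrak{R}=\mathfrak{R}_{11}\oplus\mathfrak{R}_{12}\oplus\mathfrak{R}_{21}\oplus\mathfrak{R}_{22}$, satisfying: (i) if $a_{11}\in\mathfrak{R}_{11}$, $a_{22}\in\mathfrak{R}_{22}$ and $[a_{11}+a_{22},\mathfrak{R}_{12}]=0$, then $a_{11}+a_{22}\in\mathcal{Z}(\mathfrak{R})$; (ii) if $a_{11}\in\mathfrak{R}_{11}$, $a_{22}\in\mathfrak{R}_{22}$ and $[a_{11}+a_{22},\mathfrak{R}_{21}]=0$, then $a_{11}+a_{22}\in\mathcal{Z}(\mathfrak{R})$. Let $\mathcal{D}$ be a multiplicative Lie-type derivation of $\mathfrak{R}$. Then for any $a_{12}\in\mathfrak{R}_{12}$ and $b_{21}\in\mathfrak{R}_{21}$, $\mathcal{D}(a_{12}+b_{21})=\mathcal{D}(a_{12})+\mathcal{D}(b_{21})$.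
   Context: Rings are not assumed associative or unital. The associator is $(x,y,z)=(xy)z-x(yz)$; $\mathfrak{R}$ is alternative if $(x,x,y)=0=(y,x,x)$ for all $x,y$. $[x,y]=xy-yx$ and $\mathcal{Z}(\mathfrak{R})=\{r: [r,x]=0\ \forall x\in\mathfrak{R}\}$. Define $p_1(x)=x$, $p_n(x_1,\dots,x_n)=[p_{n-1}(x_1,\dots,x_{n-1}),x_n]$. For $n\ge2$, a (not necessarily additive) map $\mathcal{D}\colon\mathfrak{R}\to\mathfrak{R}$ is a multiplicative Lie $n$-derivation if $\mathcal{D}(p_n(x_1,\dots,x_n))=\sum_{i=1}^n p_n(x_1,\dots,\mathcal{D}(x_i),\dots,x_n)$ for all $x_i\in\mathfrak{R}$; a multiplicative Lie-type derivation is a multiplicative Lie $n$-derivation for some $n\ge2$. A nontrivial idempotent is $e_1\ne0$ with $e_1^2=e_1$ which is not a multiplicative identity. With $e_2a:=a-e_1a$, $ae_2:=a-ae_1$, set $\mathfrak{R}_{ij}=e_i\mathfrak{R}e_j$ ($i,j=1,2$), so $\mathfrak{R}=\bigoplus_{i,j}\mathfrak{R}_{ij}$. *)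

Record NARing := {
  carrier :> Type;
  zero : carrier;
  add : carrier -> carrier -> carrier;
  opp : carrier -> carrier;
  mul : carrier -> carrier -> carrier;
  addA : forall x y z, add x (add y z) = add (add x y) z;
  addC : forall x y, add x y = add y x;
  add0r : forall x, add zero x = x;
  addNr : forall x, add (opp x) x = zero;
  mulDl : forall x y z, mul (add x y) z = add (mul x z) (mul y z);
  mulDr : forall x y z, mul x (add y z) = add (mul x y) (mul x z)
}.

Arguments zero {_}.
Arguments add {_}.
Arguments opp {_}.
Arguments mul {_}.

Definition sub {R : NARing} (x y : R) : R := add x (opp y).

Definition associator {R : NARing} (x y z : R) : R :=
  sub (mul (mul x y) z) (mul x (mul y z)).

Definition alternative (R : NARing) : Prop :=
  forall x y : R, associator x x y = zero /\ associator y x x = zero.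

Definition lie {R : NARing} (x y : R) : R := sub (mul x y) (mul y x).

Definition center {R : NARing} (r : R) : Prop := forall x : R, lie r x = zero.

(* Lie polynomials, indexed from 0: pcomm k xs = p_{k+1}(xs 0, ..., xs k).
   pcomm 0 xs = xs 0 ;  pcomm (k+1) xs = [pcomm k xs, xs (k+1)]. *)
Fixpoint pcomm {R : NARing} (k : nat) (xs : nat -> R) : R :=
  match k with
  | O => xs O
  | S k' => lie (pcomm k' xs) (xs (S k'))
  end.

Definition p_ {R : NARing} (n : nat) (xs : nat -> R) : R := pcomm (Nat.pred n) xs.

Fixpoint sum_lt {R : NARing} (n : nat) (f : nat -> R) : R :=
  match n with
  | O => zero
  | S k => add (sum_lt k f) (f k)
  end.

Definition upd {R : NARing} (xs : nat -> R) (i : nat) (y : R) : nat -> R :=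
  fun j => if Nat.eqb j i then y else xs j.

(* multiplicative (not necessarily additive) Lie n-derivation:
   D(p_n(x_1..x_n)) = sum_i p_n(x_1, .., D(x_i), .., x_n). Arguments are
   xs 0, ..., xs (n-1); later entries of xs are irrelevant. *)
Definition lie_n_derivation {R : NARing} (n : nat) (D : R -> R) : Prop :=
  forall xs : nat -> R,
    D (p_ n xs) = sum_lt n (fun i => p_ n (upd xs i (D (xs i)))).

Definition lie_type_derivation {R : NARing} (D : R -> R) : Prop :=
  exists n : nat, 2 <= n /\ lie_n_derivation n D.

Definition nontrivial_idempotent {R : NARing} (e : R) : Prop :=
  e <> zero /\ mul e e = e /\ ~ (forall x : R, mul e x = x /\ mul x e = x).

(* Peirce components: e_1 a = e a, e_2 a = a - e a, a e_1 = a e, a e_2 = a - a e;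
   R_ij = e_i R e_j = { (e_i x) e_j | x in R }. *)
Definition lmul_e {R : NARing} (e : R) (i : nat) (x : R) : R :=
  if Nat.eqb i 1 then mul e x else sub x (mul e x).
Definition rmul_e {R : NARing} (e : R) (j : nat) (x : R) : R :=
  if Nat.eqb j 1 then mul x e else sub x (mul x e).

Definition peirce {R : NARing} (e : R) (i j : nat) (a : R) : Prop :=
  exists x : R, a = rmul_e e j (lmul_e e i x).

(* Let P c := [...[c, e], ..., e] with k >= 1 copies of e, where the Lie-type
   derivation D is a Lie (k+2)-derivation (a Lie 2-derivation is also a Lie
   3-derivation).  Expanding D on p_(k+2)(x, y, e, ..., e) gives
     D (P [x, y]) = P [D x, y] + P [x, D y] + S [x, y]
   with S additive, and every function F x y of this shape satisfies the
   rectangle identity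
     F (x+u) (y+v) + F x y + F x v + F u y + F u v
       = F x (y+v) + F (x+u) y + F (x+u) v + F u (y+v).
   For a in R12, b in R21 and a' = (-1)^k a, alternativity gives
   P [e, a'] = a, P [b, e] = b, and P [e, e] = P [b, a'] = 0 because [b, a']
   commutes with e.  With x = y = e, u = b, v = a' the identity reads
   D (a + b) + D a + D b = 2 (D a + D b). *)

From Stdlib Require Import List Arith Lia Bool.
Import ListNotations.

Section AdditiveGroup.
Context {R : NARing}.
Implicit Types x y z t : R.

Lemma addr0 x : add x zero = x.
Proof. rewrite addC; apply add0r. Qed.

Lemma addrN x : add x (opp x) = zero.
Proof. rewrite addC; apply addNr. Qed.

Lemma addrI x y z : add x y = add x z -> y = z.
Proof.
  intros H. rewrite <- (add0r _ y), <- (add0r _ z), <- (addNr _ x), <- !addA, H.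
  reflexivity.
Qed.

Lemma addIr x y z : add y x = add z x -> y = z.
Proof. rewrite (addC _ y), (addC _ z). apply addrI. Qed.

Lemma opp_unique x y : add x y = zero -> y = opp x.
Proof. intros H. apply (addrI x). rewrite H, addrN. reflexivity. Qed.

Lemma oppK x : opp (opp x) = x.
Proof. symmetry; apply opp_unique, addNr. Qed.

Lemma oppr0 : opp (@zero R) = zero.
Proof. symmetry; apply opp_unique, add0r. Qed.

Lemma addrCA x y z : add x (add y z) = add y (add x z).
Proof. rewrite !addA, (addC _ x y). reflexivity. Qed.

Lemma addrACA x y z t : add (add x y) (add z t) = add (add x z) (add y t).
Proof. rewrite <- !addA, (addrCA y z t). reflexivity. Qed.

Lemma opprD x y : opp (add x y) = add (opp x) (opp y).
Proof. symmetry; apply opp_unique. rewrite addrACA, !addrN, add0r. reflexivity. Qed.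

Definition additive (f : R -> R) : Prop := forall x y, f (add x y) = add (f x) (f y).

Lemma additive0 f : additive f -> f zero = zero.
Proof. intros Hf. apply (addrI (f zero)). rewrite <- Hf, !addr0. reflexivity. Qed.

Lemma additiveN f : additive f -> forall x, f (opp x) = opp (f x).
Proof. intros Hf x. apply opp_unique. rewrite <- Hf, addrN. apply additive0, Hf. Qed.

Lemma additive_iter_opp f k x :
  additive f -> f (Nat.iter k opp x) = Nat.iter k opp (f x).
Proof.
  intros Hf. induction k as [|k IH]; simpl; [reflexivity|].
  rewrite additiveN, IH by exact Hf. reflexivity.
Qed.

Lemma iter_oppK k x : Nat.iter k opp (Nat.iter k opp x) = x.
Proof.
  induction k as [|k IH]; simpl; [reflexivity|].
  rewrite (additive_iter_opp opp k) by exact opprD. rewrite oppK. exact IH.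
Qed.

Lemma sum_lt_shift n (f : nat -> R) :
  sum_lt (S n) f = add (f 0) (sum_lt n (fun i => f (S i))).
Proof.
  induction n as [|n IH]; simpl.
  - rewrite add0r, addr0. reflexivity.
  - transitivity (add (sum_lt (S n) f) (f (S n))); [reflexivity|].
    rewrite IH, <- addA. reflexivity.
Qed.

Lemma sum_lt_ext n (f g : nat -> R) : (forall i, f i = g i) -> sum_lt n f = sum_lt n g.
Proof. intros H. induction n as [|n IH]; simpl; [reflexivity|]. rewrite IH, H. reflexivity. Qed.

Lemma sum_lt_additive n (f : nat -> R -> R) :
  (forall i, additive (f i)) -> additive (fun c => sum_lt n (fun i => f i c)).
Proof.
  intros Hf x y. induction n as [|n IH]; simpl.
  - rewrite add0r. reflexivity.
  - rewrite IH, Hf. apply addrACA.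
Qed.

End AdditiveGroup.

Section AbelianNormalization.
Context {R : NARing}.

Inductive gterm : Type :=
  | GAtom (n : nat)
  | GZero
  | GAdd (s t : gterm)
  | GOpp (t : gterm).

Fixpoint geval (env : list R) (t : gterm) : R :=
  match t with
  | GAtom n => nth n env zero
  | GZero => zero
  | GAdd s t => add (geval env s) (geval env t)
  | GOpp t => opp (geval env t)
  end.

Fixpoint nmul (n : nat) (x : R) : R :=
  match n with O => zero | S n => add x (nmul n x) end.

(* A normal form lists, atom by atom, a pair (p, q) standing for p x - q x. *)
Definition nf := list (nat * nat).

Definition coef_eval (c : nat * nat) (x : R) : R :=
  add (nmul (fst c) x) (opp (nmul (snd c) x)).

Fixpoint nf_eval (env : list R) (l : nf) {struct l} : R :=
  match l with
  | [] => zero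
  | c :: l' =>
    match env with
    | [] => zero
    | x :: env' => add (coef_eval c x) (nf_eval env' l')
    end
  end.

Fixpoint nf_add (l1 l2 : nf) : nf :=
  match l1, l2 with
  | [], _ => l2
  | _, [] => l1
  | c1 :: l1', c2 :: l2' => (fst c1 + fst c2, snd c1 + snd c2) :: nf_add l1' l2'
  end.

Definition nf_opp (l : nf) : nf := map (fun c => (snd c, fst c)) l.

Fixpoint nf_atom (n : nat) : nf :=
  match n with O => [(1, 0)] | S n' => (0, 0) :: nf_atom n' end.

Fixpoint normalize (t : gterm) : nf :=
  match t with
  | GAtom n => nf_atom n
  | GZero => []
  | GAdd s t => nf_add (normalize s) (normalize t)
  | GOpp t => nf_opp (normalize t)
  end.

Definition nf_is_zero (l : nf) : bool := forallb (fun c => Nat.eqb (fst c) (snd c)) l.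

Lemma nmulD m n x : nmul (m + n) x = add (nmul m x) (nmul n x).
Proof. induction m as [|m IH]; simpl; [rewrite add0r | rewrite IH, addA]; reflexivity. Qed.

Lemma nf_eval_add env l1 l2 :
  nf_eval env (nf_add l1 l2) = add (nf_eval env l1) (nf_eval env l2).
Proof.
  revert env l2. induction l1 as [|[p1 q1] l1 IH]; intros [|x env] [|[p2 q2] l2]; simpl;
    rewrite ?add0r, ?addr0; try reflexivity.
  unfold coef_eval; simpl. rewrite IH, !nmulD, opprD, (addrACA (nmul p1 x)), addrACA. reflexivity.
Qed.

Lemma nf_eval_opp env l : nf_eval env (nf_opp l) = opp (nf_eval env l).
Proof.
  revert env. induction l as [|[p q] l IH]; intros [|x env]; simpl; rewrite ?oppr0; try reflexivity.
  unfold coef_eval; simpl. rewrite IH, !opprD, oppK, (addC _ (opp _)). reflexivity.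
Qed.

Lemma nf_eval_atom env n : nf_eval env (nf_atom n) = nth n env zero.
Proof.
  revert env. induction n as [|n IH]; intros [|x env]; simpl; try reflexivity.
  - unfold coef_eval; simpl. rewrite oppr0, !addr0. reflexivity.
  - unfold coef_eval; simpl. rewrite oppr0, !add0r. apply IH.
Qed.

Lemma normalize_sound env t : nf_eval env (normalize t) = geval env t.
Proof.
  induction t; simpl.
  - apply nf_eval_atom.
  - destruct env; reflexivity.
  - rewrite nf_eval_add, IHt1, IHt2. reflexivity.
  - rewrite nf_eval_opp, IHt. reflexivity.
Qed.

Lemma nf_is_zero_sound env l : nf_is_zero l = true -> nf_eval env l = zero.
Proof.
  revert env. induction l as [|[p q] l IH]; intros [|x env] H; simpl in *; try reflexivity.
  apply andb_true_iff in H as [Hpq Hl]. apply Nat.eqb_eq in Hpq; subst q.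
  unfold coef_eval; simpl. rewrite IH, addrN, addr0 by exact Hl. reflexivity.
Qed.

Lemma geval_eq env s t :
  nf_is_zero (nf_add (normalize s) (nf_opp (normalize t))) = true -> geval env s = geval env t.
Proof.
  intros H. apply (nf_is_zero_sound env) in H.
  rewrite nf_eval_add, nf_eval_opp, !normalize_sound in H.
  rewrite <- (oppK (geval env t)). apply opp_unique. rewrite addC. exact H.
Qed.

End AbelianNormalization.

Ltac list_index x l :=
  match l with
  | x :: _ => constr:(O)
  | _ :: ?l' => let n := list_index x l' in constr:(S n)
  end.

Ltac add_atom x l :=
  match constr:(Set) with
  | _ => let _ := list_index x l in l
  | _ => constr:(x :: l)
  end.

Ltac collect_atoms t l :=
  match t with
  | add ?s ?t => let l := collect_atoms s l in collect_atoms t l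
  | sub ?s ?t => let l := collect_atoms s l in collect_atoms t l
  | opp ?s => collect_atoms s l
  | zero => l
  | _ => add_atom t l
  end.

Ltac reify t l :=
  match t with
  | add ?s ?t => let s' := reify s l in let t' := reify t l in constr:(GAdd s' t')
  | sub ?s ?t => let s' := reify s l in let t' := reify t l in constr:(GAdd s' (GOpp t'))
  | opp ?s => let s' := reify s l in constr:(GOpp s')
  | zero => constr:(GZero)
  | _ => let n := list_index t l in constr:(GAtom n)
  end.

(* Proves an equation between sums and differences of arbitrary terms that
   holds in every abelian group. *)
Ltac abel :=
  match goal with
  | |- ?s = ?t =>
    let T := type of s in
    let l := collect_atoms s (@nil T) in
    let l := collect_atoms t l in
    let s' := reify s l in
    let t' := reify t l in
    change (geval l s' = geval l t'); apply geval_eq; vm_compute; reflexivity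
  end.

Section Products.
Context {R : NARing}.
Implicit Types x y z : R.

Lemma mul0r x : mul zero x = zero.
Proof. apply (addrI (mul zero x)). rewrite <- mulDl, add0r, addr0. reflexivity. Qed.

Lemma mulr0 x : mul x zero = zero.
Proof. apply (addrI (mul x zero)). rewrite <- mulDr, add0r, addr0. reflexivity. Qed.

Lemma mulNr x y : mul (opp x) y = opp (mul x y).
Proof. apply opp_unique. rewrite <- mulDl, addrN, mul0r. reflexivity. Qed.

Lemma mulrN x y : mul x (opp y) = opp (mul x y).
Proof. apply opp_unique. rewrite <- mulDr, addrN, mulr0. reflexivity. Qed.

End Products.

Ltac expand_mul :=
  unfold sub; repeat rewrite ?mulDl, ?mulDr, ?mulNr, ?mulrN, ?mul0r, ?mulr0.

Section Commutator.
Context {R : NARing}.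
Implicit Types x y z : R.

Lemma lieDl x y z : lie (add x y) z = add (lie x z) (lie y z).
Proof. unfold lie; expand_mul; abel. Qed.

Lemma lieDr x y z : lie z (add x y) = add (lie z x) (lie z y).
Proof. unfold lie; expand_mul; abel. Qed.

Lemma lie_additive_l z : additive (fun x : R => lie x z).
Proof. intros x y. apply lieDl. Qed.

Lemma lie0l x : lie zero x = zero.
Proof. apply (additive0 (fun y => lie y x)), lie_additive_l. Qed.

Lemma lie0r x : lie x zero = zero.
Proof. apply (additive0 (fun y => lie x y)). intros y z. apply lieDr. Qed.

Lemma lie_self x : lie x x = zero.
Proof. unfold lie, sub. apply addrN. Qed.

End Commutator.

Section Alternative.
Context {R : NARing}.
Hypothesis Halt : alternative R.
Implicit Types x y z : R.

Lemma associatorDl x1 x2 y z :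
  associator (add x1 x2) y z = add (associator x1 y z) (associator x2 y z).
Proof. unfold associator; expand_mul; abel. Qed.

Lemma associatorDm x y1 y2 z :
  associator x (add y1 y2) z = add (associator x y1 z) (associator x y2 z).
Proof. unfold associator; expand_mul; abel. Qed.

Lemma associatorDr x y z1 z2 :
  associator x y (add z1 z2) = add (associator x y z1) (associator x y z2).
Proof. unfold associator; expand_mul; abel. Qed.

Lemma associator_swap12 x y z : associator x y z = opp (associator y x z).
Proof.
  apply opp_unique.
  pose proof (proj1 (Halt (add y x) z)) as H.
  rewrite associatorDl, !associatorDm, (proj1 (Halt y z)), (proj1 (Halt x z)) in H.
  rewrite <- H. abel.
Qed.

Lemma associator_swap23 x y z : associator x y z = opp (associator x z y).
Proof.
  apply opp_unique.
  pose proof (proj2 (Halt (add z y) x)) as H.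
  rewrite associatorDr, !associatorDm, (proj2 (Halt z x)), (proj2 (Halt y x)) in H.
  rewrite <- H. abel.
Qed.

Lemma associator_flexible x y : associator x y x = zero.
Proof. rewrite associator_swap12, (proj2 (Halt x y)). apply oppr0. Qed.

Lemma mulrA_associator x y z : associator x y z = zero -> mul (mul x y) z = mul x (mul y z).
Proof.
  unfold associator, sub. intros H.
  apply (addIr (opp (mul x (mul y z)))). rewrite addrN. exact H.
Qed.

Definition peirce12_eq (e a : R) : Prop := mul e a = a /\ mul a e = zero.
Definition peirce21_eq (e b : R) : Prop := mul e b = zero /\ mul b e = b.

Lemma peirce12_eq_lie e a : peirce12_eq e a -> lie e a = a /\ lie a e = opp a.
Proof.
  unfold lie, sub. intros [Hea Hae]. rewrite Hea, Hae, oppr0, addr0, add0r.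
  split; reflexivity.
Qed.

Lemma peirce21_eq_lie e b : peirce21_eq e b -> lie b e = b.
Proof. unfold lie, sub. intros [Heb Hbe]. rewrite Heb, Hbe, oppr0. apply addr0. Qed.

Variable e : R.
Hypothesis Hee : mul e e = e.

Lemma mul_idem_l x : mul e (mul e x) = mul e x.
Proof. rewrite <- mulrA_associator, Hee by apply Halt. reflexivity. Qed.

Lemma mul_idem_r x : mul (mul x e) e = mul x e.
Proof. rewrite mulrA_associator, Hee by apply Halt. reflexivity. Qed.

Lemma mul_idem_flexible x : mul (mul e x) e = mul e (mul x e).
Proof. apply mulrA_associator, associator_flexible. Qed.

Lemma peirce12_eqP a : peirce e 1 2 a -> peirce12_eq e a.
Proof.
  intros [x ->]. unfold rmul_e, lmul_e; simpl.
  split; expand_mul.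
  - rewrite mul_idem_l, <- mul_idem_flexible, mul_idem_l. reflexivity.
  - rewrite mul_idem_r. apply addrN.
Qed.

Lemma peirce21_eqP b : peirce e 2 1 b -> peirce21_eq e b.
Proof.
  intros [x ->]. unfold rmul_e, lmul_e; simpl.
  split; expand_mul.
  - rewrite <- mul_idem_flexible, mul_idem_flexible, mul_idem_l. abel.
  - rewrite !mul_idem_r. reflexivity.
Qed.

Lemma peirce12_eq_iter_opp k a : peirce12_eq e a -> peirce12_eq e (Nat.iter k opp a).
Proof.
  unfold peirce12_eq. intros [Hea Hae].
  induction k as [|k [IH1 IH2]]; simpl; [split; assumption|].
  rewrite mulrN, mulNr, IH1, IH2, oppr0. split; reflexivity.
Qed.

(* The products b a and a b lie in R22 and R11, so [b, a] commutes with e. *)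
Lemma lie_peirce21_12_e a b :
  peirce12_eq e a -> peirce21_eq e b -> lie (lie b a) e = zero.
Proof.
  intros [Hea Hae] [Heb Hbe].
  assert (Hbea : associator b e a = zero).
  { unfold associator. rewrite Hbe, Hea. apply addrN. }
  assert (Haeb : associator a e b = zero).
  { unfold associator. rewrite Hae, Heb, mul0r, mulr0. apply addrN. }
  assert (Hbae : mul (mul b a) e = zero).
  { rewrite mulrA_associator, Hae by (rewrite associator_swap23, Hbea; apply oppr0).
    apply mulr0. }
  assert (Heba : mul e (mul b a) = zero).
  { rewrite <- mulrA_associator, Heb by (rewrite associator_swap12, Hbea; apply oppr0).
    apply mul0r. }
  assert (Habe : mul (mul a b) e = mul a b).
  { rewrite mulrA_associator, Hbe by (rewrite associator_swap23, Haeb; apply oppr0).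
    reflexivity. }
  assert (Heab : mul e (mul a b) = mul a b).
  { rewrite <- mulrA_associator, Hea by (rewrite associator_swap12, Haeb; apply oppr0).
    reflexivity. }
  unfold lie. expand_mul. rewrite Hbae, Heba, Habe, Heab. abel.
Qed.

End Alternative.

Section LieIter.
Context {R : NARing}.

(* The entries of [zs] are numbered as the arguments of [pcomm]: the brackets
   are taken with [zs 2], ..., [zs (k+1)]. *)
Fixpoint lie_tail (k : nat) (zs : nat -> R) (c : R) : R :=
  match k with
  | O => c
  | S k' => lie (lie_tail k' zs c) (zs (S (S k')))
  end.

Lemma pcomm_S k (xs : nat -> R) : pcomm (S k) xs = lie_tail k xs (lie (xs 0) (xs 1)).
Proof. induction k as [|k IH]; [reflexivity|]. simpl in *. rewrite IH. reflexivity. Qed.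

Lemma lie_tail_ext k (zs zs' : nat -> R) c :
  (forall j, 2 <= j -> zs j = zs' j) -> lie_tail k zs c = lie_tail k zs' c.
Proof.
  intros H. induction k as [|k IH]; simpl; [reflexivity|].
  rewrite IH, H by lia. reflexivity.
Qed.

Lemma lie_tail_additive k (zs : nat -> R) : additive (lie_tail k zs).
Proof.
  intros x y. induction k as [|k IH]; simpl; [reflexivity|].
  rewrite IH. apply lieDl.
Qed.

Definition lie_iter (k : nat) (e c : R) : R := lie_tail k (fun _ => e) c.

Definition lie_iter_subst (k : nat) (e d c : R) : R :=
  sum_lt k (fun i => lie_tail k (upd (fun _ => e) (S (S i)) d) c).

Lemma lie_iter0 k e : lie_iter k e zero = zero.
Proof. apply additive0, lie_tail_additive. Qed.

Lemma lie_iter_subst_additive k e d : additive (lie_iter_subst k e d).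
Proof.
  apply (sum_lt_additive k (fun i => lie_tail k (upd (fun _ => e) (S (S i)) d))).
  intros i. apply lie_tail_additive.
Qed.

Lemma lie_iter_lieDl k e x y z :
  lie_iter k e (lie (add x y) z) = add (lie_iter k e (lie x z)) (lie_iter k e (lie y z)).
Proof. unfold lie_iter. rewrite lieDl. apply lie_tail_additive. Qed.

Lemma lie_iter_lieDr k e x y z :
  lie_iter k e (lie z (add x y)) = add (lie_iter k e (lie z x)) (lie_iter k e (lie z y)).
Proof. unfold lie_iter. rewrite lieDr. apply lie_tail_additive. Qed.

Lemma lie_iter_fix k e c : lie c e = c -> lie_iter k e c = c.
Proof.
  intros H. unfold lie_iter. induction k as [|k IH]; simpl; [reflexivity|].
  rewrite IH. exact H.
Qed.

Lemma lie_iter_eigenN k e c : lie c e = opp c -> lie_iter k e c = Nat.iter k opp c.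
Proof.
  intros H. unfold lie_iter. induction k as [|k IH]; simpl; [reflexivity|].
  rewrite IH. rewrite (additive_iter_opp (fun x => lie x e)) by apply lie_additive_l.
  rewrite H. symmetry. exact (additive_iter_opp opp k c opprD).
Qed.

Lemma lie_iter_kill k e c : lie c e = zero -> lie_iter (S k) e c = zero.
Proof.
  intros H. unfold lie_iter. induction k as [|k IH]; simpl in *; [exact H|].
  rewrite IH. apply lie0l.
Qed.

End LieIter.

Section Rectangle.
Context {R : NARing}.
Variables (f : R -> R) (B C F : R -> R -> R).
Hypothesis BDl : forall x y z, B (add x y) z = add (B x z) (B y z).
Hypothesis BDr : forall x y z, B z (add x y) = add (B z x) (B z y).
Hypothesis CDl : forall x y z, C (add x y) z = add (C x z) (C y z).
Hypothesis CDr : forall x y z, C z (add x y) = add (C z x) (C z y).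
Hypothesis HF : forall x y, F x y = add (add (B (f x) y) (B x (f y))) (C x y).

(* For biadditive F both sides equal 2 (F x y + F x v + F u y + F u v); the
   identity survives the terms B (f _) _ and B _ (f _), which are additive in
   one argument only. *)
Lemma rectangle_identity x u y v :
  add (add (add (add (F (add x u) (add y v)) (F x y)) (F x v)) (F u y)) (F u v)
  = add (add (add (F x (add y v)) (F (add x u) y)) (F (add x u) v)) (F u (add y v)).
Proof. rewrite !HF, !BDl, !BDr, !CDl, !CDr. abel. Qed.

End Rectangle.

Section LieDerivation.
Context {R : NARing}.
Variable D : R -> R.

Lemma lie_n_derivation_lie_iter k e x y :
  lie_n_derivation (S (S k)) D ->
  D (lie_iter k e (lie x y)) =
  add (add (lie_iter k e (lie (D x) y)) (lie_iter k e (lie x (D y))))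
      (lie_iter_subst k e (D e) (lie x y)).
Proof.
  intros HD.
  set (xs := fun j => match j with 0 => x | 1 => y | _ => e end).
  assert (Htail : forall zs c, (forall j, 2 <= j -> zs j = e) ->
                    lie_tail k zs c = lie_iter k e c).
  { intros zs c H. apply lie_tail_ext. exact H. }
  specialize (HD xs). unfold p_ in HD; simpl Nat.pred in HD.
  rewrite pcomm_S, Htail in HD by (intros [|[|j]] Hj; [lia|lia|reflexivity]).
  change (lie (xs 0) (xs 1)) with (lie x y) in HD.
  rewrite HD, !sum_lt_shift, addA. cbv beta. unfold p_; simpl Nat.pred.
  f_equal; [f_equal|].
  - rewrite pcomm_S, Htail by (intros [|[|j]] Hj; [lia|lia|reflexivity]). reflexivity.
  - rewrite pcomm_S, Htail by (intros [|[|j]] Hj; [lia|lia|reflexivity]). reflexivity.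
  - apply sum_lt_ext. intros i. rewrite pcomm_S. apply lie_tail_ext.
    intros j Hj. unfold upd. destruct (Nat.eqb j (S (S i))); [reflexivity|].
    destruct j as [|[|j]]; [lia|lia|reflexivity].
Qed.

Lemma lie_n_derivation0 k : lie_n_derivation (S (S k)) D -> D zero = zero.
Proof.
  intros HD.
  pose proof (lie_n_derivation_lie_iter k zero zero zero HD) as H.
  assert (Hsubst : lie_iter_subst k zero (D zero) zero = zero)
    by apply additive0, lie_iter_subst_additive.
  rewrite !lie0l, !lie0r, !lie_iter0, Hsubst, !add0r in H.
  exact H.
Qed.

Lemma lie_n_derivation_rectangle k e x u y v :
  lie_n_derivation (S (S k)) D ->
  let F x y := D (lie_iter k e (lie x y)) in
  add (add (add (add (F (add x u) (add y v)) (F x y)) (F x v)) (F u y)) (F u v)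
  = add (add (add (F x (add y v)) (F (add x u) y)) (F (add x u) v)) (F u (add y v)).
Proof.
  intros HD F.
  apply (rectangle_identity D (fun x y => lie_iter k e (lie x y))
           (fun x y => lie_iter_subst k e (D e) (lie x y))).
  - apply lie_iter_lieDl.
  - apply lie_iter_lieDr.
  - intros x' y' z'. rewrite lieDl. apply lie_iter_subst_additive.
  - intros x' y' z'. rewrite lieDr. apply lie_iter_subst_additive.
  - intros x' y'. apply lie_n_derivation_lie_iter, HD.
Qed.

Lemma lie_2_derivation_3 : lie_n_derivation 2 D -> lie_n_derivation 3 D.
Proof.
  intros H2.
  assert (HL : forall x y, D (lie x y) = add (lie (D x) y) (lie x (D y))).
  { intros x y. specialize (H2 (fun j => match j with 0 => x | _ => y end)).
    simpl in H2. rewrite add0r in H2. exact H2. }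
  intros xs. unfold p_; simpl. rewrite HL, HL, lieDl, add0r. reflexivity.
Qed.

Lemma lie_type_derivation_ge3 :
  lie_type_derivation D -> exists k, lie_n_derivation (S (S (S k))) D.
Proof.
  intros [n [Hn HDn]]. destruct n as [|[|[|k]]]; try lia.
  - exists 0. apply lie_2_derivation_3, HDn.
  - exists k. exact HDn.
Qed.

End LieDerivation.

Theorem lemma2p3 (R : NARing) (e : R)
  (Halt : alternative R)
  (He : nontrivial_idempotent e)
  (Hi : forall a11 a22 : R, peirce e 1 1 a11 -> peirce e 2 2 a22 ->
          (forall x : R, peirce e 1 2 x -> lie (add a11 a22) x = zero) ->
          center (add a11 a22))
  (Hii : forall a11 a22 : R, peirce e 1 1 a11 -> peirce e 2 2 a22 ->
          (forall x : R, peirce e 2 1 x -> lie (add a11 a22) x = zero) ->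
          center (add a11 a22))
  (D : R -> R) (HD : lie_type_derivation D) :
  forall a12 b21 : R, peirce e 1 2 a12 -> peirce e 2 1 b21 ->
    D (add a12 b21) = add (D a12) (D b21).
Proof.
  intros a b Ha Hb.
  destruct He as [_ [Hee _]].
  destruct (lie_type_derivation_ge3 D HD) as [m HDm].
  apply (peirce12_eqP Halt e Hee) in Ha. apply (peirce21_eqP Halt e Hee) in Hb.
  set (a' := Nat.iter (S m) opp a).
  assert (Ha' : peirce12_eq e a') by apply peirce12_eq_iter_opp, Ha.
  destruct (peirce12_eq_lie e a' Ha') as [Hea' Ha'e].
  assert (Pee : lie_iter (S m) e (lie e e) = zero) by (rewrite lie_self; apply lie_iter0).
  assert (Pea : lie_iter (S m) e (lie e a') = a)
    by (rewrite Hea', lie_iter_eigenN by exact Ha'e; apply iter_oppK).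
  assert (Pbe : lie_iter (S m) e (lie b e) = b)
    by (rewrite peirce21_eq_lie by exact Hb; apply lie_iter_fix, peirce21_eq_lie, Hb).
  assert (Pba : lie_iter (S m) e (lie b a') = zero)
    by (apply lie_iter_kill, (lie_peirce21_12_e Halt e); assumption).
  pose proof (lie_n_derivation_rectangle D (S m) e e b e a' HDm) as H.
  cbv beta zeta in H.
  rewrite !lie_iter_lieDl, !lie_iter_lieDr, Pee, Pea, Pbe, Pba, ?add0r, ?addr0,
    (lie_n_derivation0 D (S m) HDm), ?addr0 in H.
  apply addIr, addIr in H. exact H.
Qed.
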